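(* Let $k,\ell,n,p$ be positive integers, and let $C\in\mathbb{R}^{k\times \ell}$, $A\in\mathbb{R}^{n\times p}$, $M\in\mathbb{R}^{k\times k}$ symmetric positive semidefinite, and $B\in\mathbb{R}^{k\times n}$ injective (i.e. $\mathrm{null}(B)=\{0\}$). Define the block matrix \[ \mathcal{M}:=\begin{bmatrix} -C^T & 0\\ 0 & -A^T\\ M & -B\\ B^T & 0\end{bmatrix}\in\mathbb{R}^{(\ell+p+k+n)\times(k+n)}. \] Then $\mathcal{M}$ is injective if and only if \[ \mathrm{null}(M)\cap\mathrm{null}(B^T)\cap\mathrm{null}(C^T)=\{0\}. \]
   Context: This matrix arises from the KKT system of the problem of minimizing over $y\in\mathbb{R}^n$ the piecewise linear quadratic function $\rho(y)=\sup_{u\in\mathbb{R}^k:\,C^Tu\le c}\{\langle u,b+By\rangle-\tfrac12\langle u,Mu\rangle\}$ subject to $A^Ty\le a$, where $b\in\mathbb{R}^k$, $c\in\mathbb{R}^\ell$, $a\in\mathbb{R}^p$. $\mathrm{null}(\cdot)$ denotes the null space. *)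

From mathcomp Require Import all_boot all_order all_algebra.
From mathcomp Require Import Rstruct.
From Stdlib Require Import Rdefinitions.
Set Implicit Arguments. Unset Strict Implicit. Unset Printing Implicit Defensive.
Import GRing.Theory Num.Theory.
Local Open Scope ring_scope.

Definition mx_injective (r c : nat) (A : 'M[R]_(r, c)) : Prop :=
  forall x : 'cV[R]_c, A *m x = 0 -> x = 0.

Definition psd (m : nat) (M : 'M[R]_m) : Prop :=
  M^T = M /\ forall x : 'cV[R]_m, 0 <= (x^T *m M *m x) 0 0.

Definition kkt_mx (k l n p : nat) (C : 'M[R]_(k, l)) (A : 'M[R]_(n, p))
  (M : 'M[R]_k) (B : 'M[R]_(k, n)) : 'M[R]_(l + p + k + n, k + n) :=
  col_mx (col_mx (col_mx (row_mx (- C^T) 0) (row_mx 0 (- A^T)))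
                 (row_mx M (- B)))
         (row_mx B^T 0).

From mathcomp Require Import all_boot all_order all_algebra.
From mathcomp Require Import Rstruct.
From Stdlib Require Import Rdefinitions.
From mathcomp Require Import ring lra.
Set Implicit Arguments. Unset Strict Implicit. Unset Printing Implicit Defensive.
Import GRing.Theory Num.Theory.
Local Open Scope ring_scope.

(* A kernel vector (u, v) of the KKT matrix has C^T u = 0, A^T v = 0,
   B^T u = 0 and M u = B v.  Then u^T M u = (B^T u)^T v = 0, which for a
   positive semidefinite M forces M u = 0; so u lies in the triple null space,
   and v vanishes by injectivity of B.  Conversely (u, 0) is a kernel vector
   for every u in the triple null space. *)

Section NonnegativeQuadraticForm.
Variables (F : realFieldType) (m : nat).

Lemma trmx_mul_self_eq0 (v : 'cV[F]_m) : (v^T *m v) 0 0 = 0 -> v = 0.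
Proof.
rewrite mxE => sum_sq0; apply/matrixP => i j; rewrite (ord1 j) !mxE.
have sq_ge0 i0 : true -> 0 <= v^T 0 i0 * v i0 0.
  by move=> _; rewrite mxE -expr2 sqr_ge0.
have := psumr_eq0P sq_ge0 sum_sq0 (isT : true : bool) (i := i).
by rewrite mxE => /eqP; rewrite mulf_eq0 orbb => /eqP.
Qed.

Variable M : 'M[F]_m.
Hypothesis M_sym : M^T = M.

Lemma quad_form_sym (u v : 'cV[F]_m) :
  (u^T *m M *m v) 0 0 = (v^T *m M *m u) 0 0.
Proof.
rewrite -[u^T *m M *m v]trmxK [in LHS]mxE.
by rewrite !trmx_mul trmxK M_sym mulmxA.
Qed.

Lemma quad_formDZ (u w : 'cV[F]_m) (t : F) :
  ((u + t *: w)^T *m M *m (u + t *: w)) 0 0 =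
  (u^T *m M *m u) 0 0 + 2 * t * (w^T *m M *m u) 0 0
    + t ^+ 2 * (w^T *m M *m w) 0 0.
Proof.
rewrite [(u + _)^T]linearD /= [(t *: w)^T]linearZ /= !mulmxDl !mulmxDr.
rewrite -!scalemxAl -!scalemxAr scalerA.
rewrite 3![(_ + _ : 'M_1) 0 0]mxE 3![(_ *: _ : 'M_1) 0 0]mxE.
rewrite (quad_form_sym u w) expr2; ring.
Qed.

Hypothesis M_nneg : forall x : 'cV[F]_m, 0 <= (x^T *m M *m x) 0 0.

(* With a = (M u)^T M u and s = a / (c + 1), the form at u - s M u equals
   -s^2 (c + 2), so nonnegativity forces s = 0 and hence a = |M u|^2 = 0. *)
Lemma quad_form_eq0_mulmx (u : 'cV[F]_m) :
  (u^T *m M *m u) 0 0 = 0 -> M *m u = 0.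
Proof.
move=> qu0; apply: trmx_mul_self_eq0; rewrite mulmxA.
set a := ((M *m u)^T *m M *m u) 0 0; set c := ((M *m u)^T *m M *m (M *m u)) 0 0.
have c_ge0 : 0 <= c by apply: M_nneg.
set s := a / (c + 1).
have a_def : a = s * (c + 1) by rewrite /s mulfVK //; apply/lt0r_neq0; lra.
have := M_nneg (u + (- s) *: (M *m u)).
rewrite quad_formDZ qu0 -/a -/c => q_ge0.
have s0 : s = 0 by nra.
by rewrite a_def s0 mul0r.
Qed.

End NonnegativeQuadraticForm.

Lemma kkt_mx_mul_col_mx (k l n p : nat) (C : 'M[R]_(k, l)) (A : 'M[R]_(n, p))
    (M : 'M[R]_k) (B : 'M[R]_(k, n)) (u : 'cV[R]_k) (v : 'cV[R]_n) :
  kkt_mx C A M B *m col_mx u v =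
  col_mx (col_mx (col_mx (- (C^T *m u)) (- (A^T *m v))) (M *m u - B *m v))
         (B^T *m u).
Proof.
rewrite /kkt_mx !mul_col_mx !mul_row_col !mul0mx !mulNmx.
by rewrite add0r !addr0.
Qed.

Theorem theorem5p1 (k l n p : nat) (C : 'M[R]_(k, l)) (A : 'M[R]_(n, p))
  (M : 'M[R]_k) (B : 'M[R]_(k, n)) :
  (0 < k)%coq_nat -> (0 < l)%coq_nat -> (0 < n)%coq_nat -> (0 < p)%coq_nat ->
  psd M -> mx_injective B ->
  (mx_injective (kkt_mx C A M B) <->
   (forall u : 'cV[R]_k, M *m u = 0 -> B^T *m u = 0 -> C^T *m u = 0 -> u = 0)).
Proof.
move=> _ _ _ _ [M_sym M_nneg] B_inj; split.
- move=> kkt_inj u Mu0 BTu0 CTu0.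
  have := kkt_inj (col_mx u 0).
  rewrite kkt_mx_mul_col_mx Mu0 BTu0 CTu0 !mulmx0 !oppr0 addr0 !col_mx0.
  by move=> /(_ erefl) /eqP; rewrite col_mx_eq0 => /andP[/eqP].
- move=> null_triv x; rewrite -(vsubmxK x) kkt_mx_mul_col_mx.
  set u := usubmx x; set v := dsubmx x.
  move=> /eqP; rewrite !col_mx_eq0 !oppr_eq0 subr_eq0.
  case/andP=> [/andP[/andP[/eqP CTu0 _] /eqP Mu_Bv] /eqP BTu0].
  have qu0 : (u^T *m M *m u) 0 0 = 0.
    by rewrite -mulmxA Mu_Bv mulmxA -[u^T *m B]trmxK trmx_mul trmxK BTu0
      trmx0 mul0mx mxE.
  have Mu0 := quad_form_eq0_mulmx M_sym M_nneg qu0.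
  have u0 : u = 0 by apply: null_triv.
  have v0 : v = 0 by apply: B_inj; rewrite -Mu_Bv.
  by rewrite u0 v0 col_mx0.
Qed.
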